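(* Let $(K,\mathrm{val})$ be a $2$-henselian valued field whose residue class field $F$ has characteristic $\neq2$, let $A$ be a subring with $B\subseteq A\subseteq K$, $H=\mathrm{val}(A^\times)$, and let $\mathcal M,\mathcal N$ be quasi-quadratic modules in $A$. Write $M_g=M_g^A(\mathcal M)$ and $N_g=M_g^A(\mathcal N)$. Then (1) $\displaystyle \mathcal M+\mathcal N=\bigcup_{g\in H\cup G_{\ge e}}\Phi^A(M_g+N_g,[\![g]\!])\ \cup\ \bigcup_{l\in L}\Phi^A(F,[\![l]\!])$, where $L=\{l\in H\cup G_{\ge e}:\ l\ge g$ for some $g\in H\cup G_{\ge e}$ with $M_g+N_g=F\}$; (2) $\displaystyle \mathcal M\cap\mathcal N=\bigcup_{g\in H\cup G_{\ge e}}\Phi^A(M_g\cap N_g,[\![g]\!])$.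
   Context: Let $(G,\le)$ be a totally ordered abelian group written multiplicatively with identity $e$; $G_{\ge e}=\{g\in G:g\ge e\}$, $G^2=\{g^2:g\in G\}$. Let $(K,\mathrm{val})$ be a valued field with surjective valuation $\mathrm{val}:K\to G\cup\{\infty\}$, valuation ring $B=\{x:\mathrm{val}(x)\ge e\}$, residue map $\pi:B\to F$, residue field $F$. A strict unit is $x\in B^\times$ with $\pi(x)=1$; when $\mathrm{char}F\ne2$, $2$-henselian is equivalent to every strict unit being a square in $K$. For a subring $A$ with $B\subseteq A\subseteq K$ put $H=\mathrm{val}(A^\times)$; $H$ is a convex subgroup of $G$ and $\mathrm{val}(A\setminus\{0\})=H\cup G_{\ge e}$. For $g\in G$: $\overline g$ is its class in $G/G^2$, $[\![g]\!]$ its class in $G/H^2$; ''$\mathrm{val}(x)=\overline g$'' means $\overline{\mathrm{val}(x)}=\overline g$, similarly for $[\![\cdot]\!]$. A quasi-quadratic module in a commutative ring $R$ is a subset $M\subseteq R$ with $M+M\subseteq M$ and $a^2M\subseteq M$ for all $a\in R$. A pseudo-angular component map is a map $\mathrm{p.an}:K^\times\to F^\times$ such that: (1) $\mathrm{p.an}(u)=\pi(u)$ for $u\in B^\times$; (2) $\mathrm{p.an}(ux)=\pi(u)\mathrm{p.an}(x)$ for $u\in B^\times,x\in K^\times$; (3) for all $g\in G$, $c\in F^\times$ there is $w\in K$ with $\mathrm{val}(w)=g$, $\mathrm{p.an}(w)=c$; (4) for nonzero $x_1,x_2$ with $x_1+x_2\ne0$: if $\mathrm{val}(x_1)<\mathrm{val}(x_2)$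 then $\mathrm{p.an}(x_1+x_2)=\mathrm{p.an}(x_1)$; if $\mathrm{val}(x_1)=\mathrm{val}(x_2)$ and $\mathrm{p.an}(x_1)+\mathrm{p.an}(x_2)\ne0$ then $\mathrm{val}(x_1+x_2)=\mathrm{val}(x_1)$ and $\mathrm{p.an}(x_1+x_2)=\mathrm{p.an}(x_1)+\mathrm{p.an}(x_2)$; (5) if $x,y\in K^\times$, $\overline{\mathrm{val}(x)}=\overline{\mathrm{val}(y)}$ and $\mathrm{p.an}(x)=\mathrm{p.an}(y)$ then $y=u^2x$ for some $u\in K^\times$; (6) for $a,u\in K^\times$ there is $k\in F^\times$ with $\mathrm{p.an}(au^2)=\mathrm{p.an}(a)k^2$. Such a map exists under the hypotheses; fix one. For $g\in G$ and a quasi-quadratic module $M$ in $F$: $$\Phi^A(M,[\![g]\!])=\{x\in A\setminus\{0\}:\ \mathrm{val}(x)=\overline g,\ (\mathrm{val}(x)=[\![g]\!]\ \text{or}\ \mathrm{val}(x)>g),\ \mathrm{p.an}(x)\in M\}\cup\{0\}.$$ For a quasi-quadratic module $\mathcal M$ in $A$ and $g\in G$: $M_g^A(\mathcal M)=\{\mathrm{p.an}(x):x\in\mathcal M\setminus\{0\},\ \mathrm{val}(x)=g\}\cup\{0\}$. *)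

From HB Require Import structures.
From mathcomp Require Import all_boot all_order all_algebra.
Set Implicit Arguments. Unset Strict Implicit. Unset Printing Implicit Defensive.
Import GRing.Theory.
Local Open Scope ring_scope.

Record ordAbGroup := OrdAbGroup {
  og_car :> Type;
  og_mul : og_car -> og_car -> og_car;
  og_one : og_car;
  og_inv : og_car -> og_car;
  og_le : og_car -> og_car -> Prop;
  og_mulA : forall x y z, og_mul x (og_mul y z) = og_mul (og_mul x y) z;
  og_mulC : forall x y, og_mul x y = og_mul y x;
  og_mul1 : forall x, og_mul og_one x = x;
  og_mulV : forall x, og_mul (og_inv x) x = og_one;
  og_le_refl : forall x, og_le x x;
  og_le_anti : forall x y, og_le x y -> og_le y x -> x = y;
  og_le_trans : forall x y z, og_le x y -> og_le y z -> og_le x z;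
  og_le_total : forall x y, og_le x y \/ og_le y x;
  og_le_mul : forall x y z, og_le x y -> og_le (og_mul x z) (og_mul y z)
}.

Section Defs.
Variable G : ordAbGroup.

Definition og_lt (x y : G) : Prop := og_le x y /\ x <> y.

(* G ∪ {∞}, with None = ∞ the top element. *)
Definition vle (a b : option G) : Prop :=
  match b with
  | None => True
  | Some y => match a with None => False | Some x => og_le x y end
  end.
Definition vlt (a b : option G) : Prop := vle a b /\ a <> b.
Definition vmul (a b : option G) : option G :=
  match a, b with Some x, Some y => Some (og_mul x y) | _, _ => None end.

Definition cls2 (g h : G) : Prop := exists k : G, h = og_mul g (og_mul k k).

Variables (K F : fieldType) (val : K -> option G) (pi : K -> F).

Definition is_surj_valuation : Prop :=
  (forall x, val x = None <-> x = 0) /\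
  (forall x y, val (x * y) = vmul (val x) (val y)) /\
  (forall x y h, vle h (val x) -> vle h (val y) -> vle h (val (x + y))) /\
  (forall g : G, exists x, val x = Some g).

Definition inB (x : K) : Prop := vle (Some (og_one G)) (val x).
Definition inBunit (x : K) : Prop := x != 0 /\ inB x /\ inB x^-1.

Definition is_residue_map : Prop :=
  (forall x y, inB x -> inB y -> pi (x + y) = pi x + pi y) /\
  (forall x y, inB x -> inB y -> pi (x * y) = pi x * pi y) /\
  pi 1 = 1 /\
  (forall c : F, exists x, inB x /\ pi x = c) /\
  (forall x, inB x -> (pi x = 0 <-> vlt (Some (og_one G)) (val x))).

Definition strict_unit (x : K) : Prop := inBunit x /\ pi x = 1.

Definition two_henselian : Prop :=
  forall x, strict_unit x -> exists y, x = y * y.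

Definition is_overring (A : K -> Prop) : Prop :=
  A 0 /\ A 1 /\ (forall x y, A x -> A y -> A (x + y)) /\
  (forall x, A x -> A (- x)) /\ (forall x y, A x -> A y -> A (x * y)) /\
  (forall x, inB x -> A x).

Definition Hgrp (A : K -> Prop) (g : G) : Prop :=
  exists x, A x /\ x != 0 /\ A x^-1 /\ val x = Some g.

Definition clsH (A : K -> Prop) (g h : G) : Prop :=
  exists k, Hgrp A k /\ h = og_mul g (og_mul k k).

Definition idxset (A : K -> Prop) (g : G) : Prop := Hgrp A g \/ og_le (og_one G) g.

Variable pan : K -> F.

Definition is_pseudo_angular : Prop :=
  (forall x, x != 0 -> pan x != 0) /\
  (forall u, inBunit u -> pan u = pi u) /\
  (forall u x, inBunit u -> x != 0 -> pan (u * x) = pi u * pan x) /\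
  (forall (g : G) (c : F), c != 0 -> exists w, val w = Some g /\ pan w = c) /\
  (forall x1 x2, x1 != 0 -> x2 != 0 -> x1 + x2 != 0 ->
     vlt (val x1) (val x2) -> pan (x1 + x2) = pan x1) /\
  (forall x1 x2, x1 != 0 -> x2 != 0 -> x1 + x2 != 0 ->
     val x1 = val x2 -> pan x1 + pan x2 != 0 ->
     val (x1 + x2) = val x1 /\ pan (x1 + x2) = pan x1 + pan x2) /\
  (forall x y, x != 0 -> y != 0 ->
     (exists gx gy, val x = Some gx /\ val y = Some gy /\ cls2 gx gy) ->
     pan x = pan y -> exists u, u != 0 /\ y = u ^+ 2 * x) /\
  (forall a u, a != 0 -> u != 0 ->
     exists k, k != 0 /\ pan (a * u ^+ 2) = pan a * k ^+ 2).

Definition Phi (A : K -> Prop) (M : F -> Prop) (g : G) (x : K) : Prop :=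
  x = 0 \/
  (A x /\ x != 0 /\ exists h, val x = Some h /\ cls2 g h /\
     (clsH A g h \/ og_lt g h) /\ M (pan x)).

Definition Mg (Mm : K -> Prop) (g : G) (c : F) : Prop :=
  c = 0 \/ exists x, Mm x /\ x != 0 /\ val x = Some g /\ pan x = c.

End Defs.

Definition qq_module (R : nzRingType) (A M : R -> Prop) : Prop :=
  (forall x, M x -> A x) /\ M 0 /\
  (forall x y, M x -> M y -> M (x + y)) /\
  (forall a x, A a -> M x -> M (a * a * x)).

Definition sumset (R : zmodType) (S T : R -> Prop) (c : R) : Prop :=
  exists a b, S a /\ T b /\ c = a + b.

From mathcomp Require Import all_boot all_order all_algebra.
From mathcomp Require Import ring.
From Stdlib Require Import Classical.
Set Implicit Arguments. Unset Strict Implicit. Unset Printing Implicit Defensive.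
Import GRing.Theory.
Local Open Scope ring_scope.

(* The whole proof rests on one transport principle (lemma [qq_transport]):
   if Q is a quasi-quadratic module in A, y ∈ Q has value g, and x has value
   h in the class of g modulo G^2 with either h ∈ g·H^2 or h > g, then
   pan x = pan y forces x ∈ Q.  Indeed axiom (5) of pseudo-angular maps gives
   x = u^2 y, and the condition on h says exactly that u ∈ A.  Consequently
   Φ^A(M_g^A(Q), [[g]]) ⊆ Q ([Phi_mem]), and if M_g^A(Q) = F then Q absorbs
   every element of value ≥ g ([Phi_full_mem]).

   The levels M_g^A(Q) are themselves quasi-quadratic modules in F ([Mg_add],
   [Mg_sq]); since char F ≠ 2, a level sum containing c and -c (c ≠ 0) is all
   of F ([sumset_full_opposite]).  The inclusions "⊇" of the theorem follow
   from the transport principle applied to M, N and M + N; the inclusions "⊆"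
   come from computing the value and pseudo-angular component of a + b
   (a ∈ M, b ∈ N), the only delicate case being cancellation of the leading
   terms ([cancelling_sum], [sumset_pieces]). *)

Section OrderedGroup.
Variable G : ordAbGroup.
Local Notation e := (og_one G).
Implicit Types x y z : G.

Lemma gmulr1 x : og_mul x e = x.
Proof. by rewrite og_mulC og_mul1. Qed.

Lemma gmulV x : og_mul x (og_inv x) = e.
Proof. by rewrite og_mulC og_mulV. Qed.

Lemma ginv1 : og_inv e = e.
Proof. by rewrite -[og_inv e]gmulr1 og_mulV. Qed.

Lemma gmulIr x y z : og_mul x z = og_mul y z -> x = y.
Proof.
move=> /(congr1 (fun t => og_mul t (og_inv z))).
by rewrite -!og_mulA gmulV !gmulr1.
Qed.

Lemma gmulrI x y z : og_mul z x = og_mul z y -> x = y.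
Proof. by rewrite (og_mulC z x) (og_mulC z y); apply: gmulIr. Qed.

Lemma gle_mul2 x y z w : og_le x y -> og_le z w -> og_le (og_mul x z) (og_mul y w).
Proof.
move=> hxy hzw; apply: (og_le_trans (og_le_mul z hxy)).
by rewrite (og_mulC y z) (og_mulC y w); apply: og_le_mul.
Qed.

Lemma gsq_inj x y : og_mul x x = og_mul y y -> x = y.
Proof.
wlog hxy : x y / og_le x y.
  by move=> hw hsq; case: (og_le_total x y) => h; [|symmetry]; apply: hw.
move=> hsq; apply: (@gmulrI _ _ x); apply: og_le_anti.
  by rewrite (og_mulC x y); apply: og_le_mul.
by rewrite hsq; apply: og_le_mul.
Qed.

Lemma gsq_pos (v g : G) : og_lt g (og_mul (og_mul v v) g) -> og_le e v.
Proof.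
case=> hle hne; case: (og_le_total e v) => // hv.
have /(og_le_mul g) : og_le (og_mul v v) e by rewrite -(og_mul1 e); apply: gle_mul2.
by rewrite og_mul1 => hge; case: hne; apply: og_le_anti.
Qed.

Lemma gmul_sqK (l k : G) :
  og_mul (og_mul l (og_mul k k)) (og_mul (og_inv k) (og_inv k)) = l.
Proof.
rewrite -og_mulA; have -> : og_mul (og_mul k k) (og_mul (og_inv k) (og_inv k)) = e.
  by rewrite og_mulA -(og_mulA k k) gmulV gmulr1 gmulV.
exact: gmulr1.
Qed.

Lemma vlt_total (u v : option G) : vlt u v \/ vlt v u \/ u = v.
Proof.
case: (classic (u = v)) => [|ne]; first by right; right.
case: u v ne => [x|] [y|] //= ne; try by [left | right; left].
by case: (og_le_total x y) => h; [left | right; left]; split => // /esym.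
Qed.

Lemma vlt_Some (u v : option G) : vlt u v -> exists g, u = Some g.
Proof. by case: u => [g _|]; [exists g | case: v => [h|] []]. Qed.

Lemma cls2_refl (g : G) : cls2 g g.
Proof. by exists e; rewrite og_mul1 gmulr1. Qed.

End OrderedGroup.

Lemma qq_sumset (R : nzRingType) (A M N : R -> Prop) :
  (forall x y, A x -> A y -> A (x + y)) ->
  qq_module A M -> qq_module A N -> qq_module A (sumset M N).
Proof.
move=> AD [MA [M0 [MD MQ]]] [NA [N0 [ND NQ]]]; split.
  by move=> _ [a [b [ha [hb ->]]]]; apply: AD; [apply: MA | apply: NA].
split; first by exists 0, 0; rewrite addr0.
split.
  move=> _ _ [a [b [ha [hb ->]]]] [a' [b' [ha' [hb' ->]]]].
  by exists (a + a'), (b + b'); rewrite addrACA; split; [apply: MD | split; [apply: ND|]].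
move=> r _ hr [a [b [ha [hb ->]]]]; exists (r * r * a), (r * r * b).
by rewrite mulrDr; split; [apply: MQ | split; [apply: NQ|]].
Qed.

(* In characteristic ≠ 2, if two sets closed under multiplication by squares
   contain c and -c respectively (c ≠ 0), their sum is the whole field:
   f = ((f/c + 1)/2)^2 c + ((f/c - 1)/2)^2 (-c). *)
Lemma sumset_full_opposite (F : fieldType) (M1 M2 : F -> Prop) c :
  (2%:R : F) != 0 -> c != 0 ->
  (forall d x, M1 x -> M1 (d * d * x)) -> (forall d x, M2 x -> M2 (d * d * x)) ->
  M1 c -> M2 (- c) -> forall f, sumset M1 M2 f.
Proof.
move=> two0 c0 sq1 sq2 M1c M2c f.
exists (((f / c + 1) / 2%:R) ^+ 2 * c), (((f / c - 1) / 2%:R) ^+ 2 * (- c)).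
rewrite !expr2; split; [exact: sq1 | split; [exact: sq2 |]].
by field; apply/andP.
Qed.

Section Valuation.
Variables (G : ordAbGroup) (K : fieldType) (val : K -> option G).
Hypothesis Hv : is_surj_valuation val.
Local Notation e := (og_one G).

Lemma val0 x : val x = None <-> x = 0.
Proof. by case: Hv => h _; apply: h. Qed.

Lemma valM x y : val (x * y) = vmul (val x) (val y).
Proof. by case: Hv => _ [h _]; apply: h. Qed.

Lemma valD_ge x y h : vle h (val x) -> vle h (val y) -> vle h (val (x + y)).
Proof. by case: Hv => _ [_ [hU _]]; apply: hU. Qed.

Lemma val_neq0 x : x != 0 -> exists g, val x = Some g.
Proof.
move=> x0; case E: (val x) => [g|]; first by exists g.
by move/val0: E => /eqP; rewrite (negbTE x0).
Qed.

Lemma valS_neq0 x g : val x = Some g -> x != 0.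
Proof. by move=> vx; apply/eqP => /val0; rewrite vx. Qed.

Lemma val1 : val 1 = Some e.
Proof.
have [o vo] := val_neq0 (oner_neq0 K).
move: (valM 1 1); rewrite mulr1 vo => -[ho].
by rewrite (@gmulrI _ o e o) // gmulr1.
Qed.

Lemma valN x : val (- x) = val x.
Proof.
have vN1 : val (-1) = Some e.
  have [o vo] : exists o, val (-1) = Some o by apply: val_neq0; rewrite oppr_eq0 oner_neq0.
  move: (valM (-1) (-1)); rewrite mulrNN mulr1 vo val1 => -[ho].
  by rewrite (@gsq_inj _ o e) // gmulr1.
by rewrite -mulN1r valM vN1; case: (val x) => //= g; rewrite og_mul1.
Qed.

Lemma valV x g : val x = Some g -> val x^-1 = Some (og_inv g).
Proof.
move=> vx; have [w vw] := val_neq0 (invr_neq0 (valS_neq0 vx)).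
move: (valM x x^-1); rewrite mulfV ?(valS_neq0 vx) // val1 vx vw => -[hw].
by congr Some; apply: (@gmulrI _ _ _ g); rewrite -hw gmulV.
Qed.

Lemma valD_lt x y gx gy : val x = Some gx -> val y = Some gy -> og_lt gx gy ->
  val (x + y) = Some gx.
Proof.
move=> vx vy [hle hne].
case E: (val (x + y)) => [z|]; last first.
  move/val0: E => /eqP; rewrite addr_eq0 => /eqP hxy.
  by case: hne; move: vx; rewrite hxy valN vy => -[].
have gx_z : og_le gx z.
  have : vle (Some gx) (val (x + y)).
    by apply: valD_ge; rewrite ?vx ?vy //=; apply: og_le_refl.
  by rewrite E.
congr Some; apply: og_le_anti => //.
have hx : x = (x + y) + (- y) by rewrite addrK.
case: (og_le_total z gy) => hz.
  have : vle (Some z) (val x).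
    by rewrite hx; apply: valD_ge; rewrite ?E ?valN ?vy //=; apply: og_le_refl.
  by rewrite vx.
have : vle (Some gy) (val x).
  by rewrite hx; apply: valD_ge; rewrite ?E ?valN ?vy //=; apply: og_le_refl.
by rewrite vx /= => hgy; case: hne; apply: og_le_anti.
Qed.

Lemma inB_val1 x : val x = Some e -> inB val x.
Proof. by move=> vx; rewrite /inB vx /=; apply: og_le_refl. Qed.

Lemma unit_val1 x : val x = Some e -> inBunit val x.
Proof.
move=> vx; split; first exact: valS_neq0 vx.
by split; apply: inB_val1; rewrite ?(valV vx) ?ginv1.
Qed.

End Valuation.

Section Residue.
Variables (G : ordAbGroup) (K F : fieldType) (val : K -> option G) (pi pan : K -> F).
Hypothesis Hv : is_surj_valuation val.
Hypothesis Hr : is_residue_map val pi.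
Hypothesis Hp : is_pseudo_angular val pi pan.
Local Notation e := (og_one G).

Lemma pi0 : pi 0 = 0.
Proof.
case: Hr => _ [_ [_ [_ hker]]]; have v0 := proj2 (val0 Hv 0) erefl.
by apply/hker; rewrite /inB v0.
Qed.

Lemma piN1 : pi (-1) = -1.
Proof.
case: Hr => hD [_ [h1 _]]; have v1 := inB_val1 (val1 Hv).
have := hD 1 (-1) v1 (inB_val1 (etrans (valN Hv 1) (val1 Hv))).
by rewrite subrr pi0 h1 => /esym /eqP; rewrite addrC addr_eq0 => /eqP.
Qed.

Lemma residue_lift d : d != 0 -> exists w, val w = Some e /\ pi w = d.
Proof.
case: Hr => _ [_ [_ [hsurj hker]]] d0; have [w [Bw pw]] := hsurj d.
exists w; split => //; move: Bw (hker w Bw); rewrite /inB.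
case: (val w) => [z|] /= hz [_ hpi0]; last by case/negP: d0; rewrite -pw hpi0.
congr Some; apply: og_le_anti => //; case: (classic (e = z)) => [-> | ne].
  exact: og_le_refl.
by case/negP: d0; rewrite -pw hpi0 //; split => // -[].
Qed.

Lemma pan_neq0 x : x != 0 -> pan x != 0.
Proof. by case: Hp => h _; apply: h. Qed.

Lemma panM_unit u x : inBunit val u -> x != 0 -> pan (u * x) = pi u * pan x.
Proof. by case: Hp => _ [_ [h _]]; apply: h. Qed.

Lemma panN x : x != 0 -> pan (- x) = - pan x.
Proof.
move=> x0; rewrite -mulN1r panM_unit // ?piN1 ?mulN1r //.
by apply: (unit_val1 Hv); rewrite (valN Hv) (val1 Hv).
Qed.

Lemma panD_lt x y gx gy : val x = Some gx -> val y = Some gy -> og_lt gx gy ->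
  val (x + y) = Some gx /\ pan (x + y) = pan x.
Proof.
move=> vx vy lt; have vxy := valD_lt Hv vx vy lt; split => //.
case: Hp => _ [_ [_ [_ [hlt _]]]].
have [[x0 y0] xy0] := (valS_neq0 Hv vx, valS_neq0 Hv vy, valS_neq0 Hv vxy).
by apply: hlt => //; rewrite vx vy; case: lt => hle hne; split => // -[].
Qed.

(* Axiom (4), second half; the hypothesis x + y ≠ 0 is automatic here. *)
Lemma panD_eq x y g : val x = Some g -> val y = Some g -> pan x + pan y != 0 ->
  val (x + y) = Some g /\ pan (x + y) = pan x + pan y.
Proof.
move=> vx vy hs; have [x0 y0] := (valS_neq0 Hv vx, valS_neq0 Hv vy).
have xy0 : x + y != 0.
  apply: contra hs; rewrite addr_eq0 => /eqP ->; by rewrite panN // addNr.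
by case: Hp => _ [_ [_ [_ [_ [h _]]]]]; rewrite -vx; apply: h; rewrite ?vx ?vy.
Qed.

End Residue.

Section Overring.
Variables (G : ordAbGroup) (K F : fieldType) (val : K -> option G) (pi pan : K -> F).
Variable A : K -> Prop.
Hypothesis Hv : is_surj_valuation val.
Hypothesis Hr : is_residue_map val pi.
Hypothesis Hp : is_pseudo_angular val pi pan.
Hypothesis HA : is_overring val A.
Local Notation e := (og_one G).
Local Notation Mg := (Mg val pan).
Local Notation Phi := (Phi val pan A).

Lemma A_B x : inB val x -> A x. Proof. by case: HA => _ [_ [_ [_ [_ h]]]]; apply: h. Qed.
Lemma A_add x y : A x -> A y -> A (x + y). Proof. by case: HA => _ [_ [h _]]; apply: h. Qed.
Lemma A_mul x y : A x -> A y -> A (x * y). Proof. by case: HA => _ [_ [_ [_ [h _]]]]; apply: h. Qed.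

Lemma idxset_val x g : A x -> val x = Some g -> idxset val A g.
Proof.
move=> Ax vx; case: (og_le_total e g) => hg; [by right | left].
exists x; split=> //; split; first exact: (valS_neq0 Hv vx).
split=> //; apply: A_B; rewrite /inB (valV Hv vx) /=.
by have := og_le_mul (og_inv g) hg; rewrite gmulV og_mul1.
Qed.

Lemma idxset_e : idxset val A e.
Proof. by right; apply: og_le_refl. Qed.

Lemma clsH_refl g : clsH val A g g.
Proof.
exists e; rewrite og_mul1 gmulr1; split=> //.
exists 1; rewrite invr1 (val1 Hv) //; case: HA => _ [A1 _]; split=> //; split=> //.
exact: oner_neq0.
Qed.

Lemma Phi_intro (P : F -> Prop) g x : A x -> val x = Some g -> P (pan x) -> Phi P g x.
Proof.
move=> Ax vx hP; right; split=> //; split; first exact: (valS_neq0 Hv vx).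
by exists g; split=> //; split; [apply: cls2_refl | split=> //; left; apply: clsH_refl].
Qed.

Lemma Phi_mono (P P' : F -> Prop) g x : (forall c, P c -> P' c) -> Phi P g x -> Phi P' g x.
Proof.
move=> hPP' [-> | [Ax [x0 [h [vx [c2 [hc hP]]]]]]]; [by left | right].
by split=> //; split=> //; exists h; do 3!split=> //; apply: hPP'.
Qed.

(* The value condition of Φ^A(·, [[g]]) means that the square factor is in A:
   if val u = v and v^2 g ∈ g·H^2 or v^2 g > g, then u ∈ A. *)
Lemma square_factor_in_A u v g :
  val u = Some v ->
  (clsH val A g (og_mul (og_mul v v) g) \/ og_lt g (og_mul (og_mul v v) g)) -> A u.
Proof.
move=> vu [[k [[t [At [t0 [Ati vt]]]] hk]] | hlt]; last first.
  by apply: A_B; rewrite /inB vu /=; apply: gsq_pos hlt.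
have vk : v = k by apply: gsq_inj; apply: (@gmulIr _ _ _ g); rewrite hk og_mulC.
have -> : u = (u * t^-1) * t by rewrite -mulrA mulVf // mulr1.
apply: A_mul => //; apply: A_B; apply: inB_val1.
by rewrite (valM Hv) vu (valV Hv vt) /= vk gmulV.
Qed.

Lemma qq_transport (Q : K -> Prop) x y g h : qq_module A Q -> Q y ->
  val y = Some g -> val x = Some h -> cls2 g h -> (clsH val A g h \/ og_lt g h) ->
  pan x = pan y -> Q x.
Proof.
move=> [_ [_ [_ QQ]]] Qy vy vx c2 hc hpan.
have [y0 x0] := (valS_neq0 Hv vy, valS_neq0 Hv vx).
case: Hp => _ [_ [_ [_ [_ [_ [hcls _]]]]]].
have same_class : exists gy gx, val y = Some gy /\ val x = Some gx /\ cls2 gy gx.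
  by exists g, h.
have [u [u0 ex]] := hcls y x y0 x0 same_class (esym hpan).
subst x; have [v vu] := val_neq0 Hv u0.
have hv : h = og_mul (og_mul v v) g.
  by move: vx; rewrite (valM Hv) expr2 (valM Hv) vu vy => -[].
rewrite hv in hc; rewrite expr2; apply: QQ => //; exact: square_factor_in_A vu hc.
Qed.

Lemma Phi_mem (Q : K -> Prop) g x : qq_module A Q -> Phi (Mg Q g) g x -> Q x.
Proof.
move=> qQ [-> | [_ [x0 [h [vx [c2 [hc [/eqP | [y [Qy [_ [vy py]]]]]]]]]]]].
- by case: qQ => _ [].
- by rewrite (negbTE (pan_neq0 Hp x0)).
- exact: (qq_transport qQ Qy vy vx c2 hc (esym py)).
Qed.

Lemma Mg_intro (Q : K -> Prop) x g : Q x -> val x = Some g -> Mg Q g (pan x).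
Proof. by move=> Qx vx; right; exists x; split=> //; split=> //; exact: (valS_neq0 Hv vx). Qed.

Lemma Mg_mono (Q Q' : K -> Prop) g c : (forall x, Q x -> Q' x) -> Mg Q g c -> Mg Q' g c.
Proof. by move=> hQ [-> | [y [Qy hy]]]; [left | right; exists y; split=> //; apply: hQ]. Qed.

Lemma Mg_add (Q : K -> Prop) g c1 c2 : qq_module A Q ->
  Mg Q g c1 -> Mg Q g c2 -> Mg Q g (c1 + c2).
Proof.
move=> [_ [_ [QD _]]] [-> | [y1 [Q1 [_ [v1 <-]]]]]; first by rewrite add0r.
move=> [-> | [y2 [Q2 [_ [v2 <-]]]]]; first by rewrite addr0; apply: Mg_intro.
have [/eqP -> | hs] := boolP (pan y1 + pan y2 == 0); first by left.
have [vs <-] := panD_eq Hv Hr Hp v1 v2 hs.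
exact: Mg_intro (QD _ _ Q1 Q2) vs.
Qed.

Lemma Mg_sq (Q : K -> Prop) g c d : qq_module A Q -> Mg Q g c -> Mg Q g (d * d * c).
Proof.
move=> [_ [_ [_ QQ]]] [-> | [y [Qy [y0 [vy <-]]]]]; first by left; rewrite mulr0.
have [-> | d0] := eqVneq d 0; first by left; rewrite !mul0r.
have [w [vw pw]] := residue_lift Hr d0.
have vww : val (w * w) = Some e by rewrite (valM Hv) vw /= og_mul1.
have -> : d * d * pan y = pan (w * w * y).
  case: Hr => _ [piM _]; rewrite (panM_unit Hp (unit_val1 Hv vww) y0).
  by rewrite (piM w w (inB_val1 vw) (inB_val1 vw)) pw.
apply: Mg_intro; first by apply: QQ => //; apply: A_B; apply: inB_val1.
by rewrite (valM Hv) vww vy /= og_mul1.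
Qed.

Lemma full_level_absorbs (Q : K -> Prop) g z l : qq_module A Q ->
  (forall c, Mg Q g c) -> val z = Some l -> og_le g l -> Q z.
Proof.
move=> qQ full vz hgl.
have at_g : forall x, val x = Some g -> Q x.
  move=> x vx; case: (full (pan x)) => [/eqP | [y [Qy [_ [vy py]]]]].
    by rewrite (negbTE (pan_neq0 Hp (valS_neq0 Hv vx))).
  exact: (qq_transport qQ Qy vy vx (cls2_refl _) (or_introl (clsH_refl _)) (esym py)).
case: (classic (g = l)) => [gl | ne]; first by apply: at_g; rewrite vz -gl.
case: (full 1) => [/eqP | [y [Qy [y0 [vy _]]]]]; first by rewrite oner_eq0.
have vNy : val (- y) = Some g by rewrite (valN Hv).
have [vyz _] := panD_lt Hv Hp vNy vz (conj hgl ne).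
have -> : z = y + (- y + z) by rewrite addNKr.
by case: qQ => _ [_ [QD _]]; apply: QD => //; apply: at_g.
Qed.

Lemma Phi_full_mem (Q : K -> Prop) g l x : qq_module A Q ->
  (forall c, Mg Q g c) -> og_le g l -> Phi (fun _ => True) l x -> Q x.
Proof.
move=> qQ full hgl [-> | [_ [_ [h [vx [_ [hc _]]]]]]]; first by case: qQ => _ [].
case: hc => [[k [[t [At [t0 [_ vt]]]] hk]] | [hlh _]]; last first.
  exact: full_level_absorbs qQ full vx (og_le_trans hgl hlh).
have vz : val (x * (t^-1 * t^-1)) = Some l.
  by rewrite !(valM Hv) vx (valV Hv vt) /= hk gmul_sqK.
have -> : x = t * t * (x * (t^-1 * t^-1)) by field.
case: (qQ) => _ [_ [_ QQ]]; apply: QQ => //.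
exact: full_level_absorbs qQ full vz hgl.
Qed.

Local Notation levelsum Mm Nm g := (sumset (Mg Mm g) (Mg Nm g)).

Lemma Mg_sumset (Mm Nm : K -> Prop) g : qq_module A Mm -> qq_module A Nm ->
  forall c, levelsum Mm Nm g c -> Mg (sumset Mm Nm) g c.
Proof.
move=> qM qN _ [m [n [hm [hn ->]]]].
apply: Mg_add; first exact: qq_sumset A_add qM qN.
- by apply: Mg_mono hm => x Mx; exists x, 0; rewrite addr0; case: qN => _ [].
- by apply: Mg_mono hn => x Nx; exists 0, x; rewrite add0r; case: qM => _ [].
Qed.

Lemma Phi_dominant (P : F -> Prop) g a b : A (a + b) -> val a = Some g ->
  vlt (Some g) (val b) -> P (pan a) -> Phi P g (a + b).
Proof.
move=> Aab va; case vb: (val b) => [gb|] hlt hP; last first.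
  by move/(val0 Hv): vb => b0; subst b; rewrite addr0 in Aab *; apply: Phi_intro.
have [vab pab] := panD_lt Hv Hp va vb (conj hlt.1 (fun eq => hlt.2 (congr1 Some eq))).
by apply: Phi_intro; rewrite ?pab.
Qed.

Definition full_level_piece (Mm Nm : K -> Prop) (x : K) : Prop :=
  exists l, idxset val A l /\
    (exists g, idxset val A g /\ og_le g l /\ (forall c, levelsum Mm Nm g c)) /\
    Phi (fun _ => True) l x.

Lemma cancelling_sum (Mm Nm : K -> Prop) a b g : (2%:R : F) != 0 ->
  qq_module A Mm -> qq_module A Nm -> Mm a -> Nm b ->
  val a = Some g -> val b = Some g -> pan a + pan b = 0 -> a + b != 0 ->
  full_level_piece Mm Nm (a + b).
Proof.
move=> two0 qM qN Ma Nb va vb hs ab0.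
have [[MA _] [NA _]] := (qM, qN).
have Aab := A_add (MA a Ma) (NA b Nb).
have [l vl] := val_neq0 Hv ab0.
exists l; split; first exact: idxset_val Aab vl.
split; last exact: Phi_intro Aab vl _.
exists g; split; first exact: idxset_val (MA a Ma) va.
split.
  have : vle (Some g) (val (a + b)).
    by apply: (valD_ge Hv); rewrite ?va ?vb /=; apply: og_le_refl.
  by rewrite vl.
have pb : - pan a = pan b by apply/esym/eqP; rewrite -addr_eq0 addrC hs.
apply: (sumset_full_opposite two0 (pan_neq0 Hp (valS_neq0 Hv va))).
- by move=> d c; apply: Mg_sq.
- by move=> d c; apply: Mg_sq.
- exact: Mg_intro Ma va.
- by rewrite pb; exact: Mg_intro Nb vb.
Qed.

Lemma sumset_pieces (Mm Nm : K -> Prop) x : (2%:R : F) != 0 ->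
  qq_module A Mm -> qq_module A Nm -> sumset Mm Nm x ->
  (exists g, idxset val A g /\ Phi (levelsum Mm Nm g) g x) \/ full_level_piece Mm Nm x.
Proof.
move=> two0 qM qN [a [b [Ma [Nb ->]]]].
have [[MA _] [NA _]] := (qM, qN).
have Aab := A_add (MA a Ma) (NA b Nb).
have [-> | ab0] := eqVneq (a + b) 0.
  by left; exists e; split; [exact: idxset_e | left].
case: (vlt_total (val a) (val b)) => [lt | [lt | eqv]].
- have [ga va] := vlt_Some lt; rewrite va in lt.
  left; exists ga; split; first exact: idxset_val (MA a Ma) va.
  apply: Phi_dominant => //; exists (pan a), 0; rewrite addr0.
  by split; [exact: Mg_intro Ma va | split; [left |]].
- have [gb vb] := vlt_Some lt; rewrite vb in lt; rewrite addrC in Aab *.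
  left; exists gb; split; first exact: idxset_val (NA b Nb) vb.
  apply: Phi_dominant => //; exists 0, (pan b); rewrite add0r.
  by split; [left | split; [exact: Mg_intro Nb vb |]].
- have [g va] : exists g, val a = Some g.
    case E: (val a) => [g|]; first by exists g.
    move: ab0; rewrite (proj1 (val0 Hv a) E) (proj1 (val0 Hv b)) -?eqv //.
    by rewrite addr0 eqxx.
  have vb : val b = Some g by rewrite -eqv.
  have [hs | hs] := eqVneq (pan a + pan b) 0.
    by right; exact: (cancelling_sum two0 qM qN Ma Nb va vb hs ab0).
  have [vab pab] := panD_eq Hv Hr Hp va vb hs.
  left; exists g; split; first exact: idxset_val (MA a Ma) va.
  apply: Phi_intro => //; rewrite pab; exists (pan a), (pan b).
  by split; [exact: Mg_intro Ma va | split; [exact: Mg_intro Nb vb |]].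
Qed.

Lemma inter_pieces (Mm Nm : K -> Prop) x : qq_module A Mm -> Mm x -> Nm x ->
  exists g, idxset val A g /\ Phi (fun c => Mg Mm g c /\ Mg Nm g c) g x.
Proof.
move=> [MA _] Mx Nx; have [-> | x0] := eqVneq x 0.
  by exists e; split; [exact: idxset_e | left].
have [g vx] := val_neq0 Hv x0.
exists g; split; first exact: idxset_val (MA x Mx) vx.
by apply: Phi_intro => //; [exact: MA | split; apply: Mg_intro].
Qed.
End Overring.


Theorem mainTheorem9 (G : ordAbGroup) (K F : fieldType)
  (val : K -> option G) (pi : K -> F) (pan : K -> F) (A Mm Nm : K -> Prop) :
  is_surj_valuation val ->
  is_residue_map val pi ->
  (2%:R : F) != 0 ->
  two_henselian val pi ->
  is_pseudo_angular val pi pan ->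
  is_overring val A ->
  qq_module A Mm -> qq_module A Nm ->
  (forall x : K,
     sumset Mm Nm x <->
     ((exists g, idxset val A g /\
          Phi val pan A (sumset (Mg val pan Mm g) (Mg val pan Nm g)) g x) \/
      (exists l, idxset val A l /\
          (exists g, idxset val A g /\ og_le g l /\
             (forall c : F, sumset (Mg val pan Mm g) (Mg val pan Nm g) c)) /\
          Phi val pan A (fun _ => True) l x))) /\
  (forall x : K,
     (Mm x /\ Nm x) <->
     (exists g, idxset val A g /\
        Phi val pan A (fun c => Mg val pan Mm g c /\ Mg val pan Nm g c) g x)).
Proof.
(* Henselianity enters only through axiom (5) of the pseudo-angular map. *)
move=> Hv Hr two0 _ Hp HA qM qN.
have qS := qq_sumset (A_add HA) qM qN.
split=> x; split.
- exact: (sumset_pieces Hv Hr Hp HA two0 qM qN).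
- case=> [[g [_ hPhi]] | [l [_ [[g [_ [hgl full]]] hPhi]]]].
  + exact: (Phi_mem Hv Hp HA qS (Phi_mono (Mg_sumset Hv Hr Hp HA qM qN) hPhi)).
  + exact: (Phi_full_mem Hv Hp HA qS (fun c => Mg_sumset Hv Hr Hp HA qM qN (full c)) hgl hPhi).
- by case=> Mx Nx; apply: (inter_pieces pan Hv HA qM).
- case=> g [_ hPhi]; split.
  + exact: (Phi_mem Hv Hp HA qM (Phi_mono (fun c => @proj1 _ _) hPhi)).
  + exact: (Phi_mem Hv Hp HA qN (Phi_mono (fun c => @proj2 _ _) hPhi)).
Qed.
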